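(* Fix a joint distribution of $(X,Y,Z)$, where $X$ is a feature vector, $Y\in\{0,1\}$ is the true label and $Z$ is a sensitive attribute taking values in a finite set $\mathcal{G}$ with $|\mathcal{G}|\ge 2$. Suppose that the fairness-accuracy pairs $(\epsilon_1,a_1),(\epsilon_2,a_2),\ldots,(\epsilon_k,a_k)$ are all achievable with respect to demographic parity. Then for any $\beta_1,\ldots,\beta_k\in[0,1]$ with $\sum_{i=1}^k\beta_i=1$, the pair $\left(\sum_{i=1}^{k}\beta_i\epsilon_i,\ \sum_{i=1}^{k}\beta_i a_i\right)$ is also achievable with respect to demographic parity. Consequently, every point of the convex hull of $\{(\epsilon_1,a_1),\ldots,(\epsilon_k,a_k)\}$ is achievable with respect to demographic parity.
   Context: A (possibly randomized) binary classifier is a conditional distribution $\pi(\hat Y\mid X)$ on $\{0,1\}$ given the features $X$ (it does not take $Z$ as input); the prediction $\hat Y$ is drawn from $\pi(\cdot\mid X)$, so that $(X,Y,Z,\hat Y)$ has a joint distribution in which $\hat Y$ is conditionally independent of $(Y,Z)$ given $X$. Its accuracy is $\mathrm{Acc}(\pi)=\Pr(\hat Y=Y)$. Write $\pi(1\mid Z=i)=\Pr(\hat Y=1\mid Z=i)$. The demographic parity bias of $\pi$ is $\Delta_{DP}(\pi)=\sum_{i\neq j,\ i,j\in\mathcal{G}}|\pi(1\mid Z=i)-\pi(1\mid Z=j)|$. A pair $(\epsilon,a)$ of real numbers is achievable with respect to demographic parity if there exists a classifier $\pi$ with $\mathrm{Acc}(\pi)\ge a$ and $\Delta_{DP}(\pi)\le\epsilon$.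 *)

From HB Require Import structures.
From mathcomp Require Import all_boot all_order all_algebra.
From mathcomp Require Import all_classical all_reals all_analysis.

Set Implicit Arguments.
Unset Strict Implicit.
Unset Printing Implicit Defensive.
Import Order.TTheory GRing.Theory Num.Theory.
Import numFieldNormedType.Exports.

Local Open Scope classical_set_scope.
Local Open Scope ring_scope.

(* A (possibly randomized) binary classifier pi(. | X) is given by the
   measurable map  f : TX -> R,  f x = pi(1 | X = x) in [0,1];
   Yhat is drawn from pi(. | X) independently of (Y, Z) given X. *)

Section Fairness.
Context {dO dX : measure_display} {Omega : measurableType dO}
  {TX : measurableType dX} {R : realType} {G : finType}.
Variables (P : probability Omega R) (X : Omega -> TX) (Y : Omega -> bool)
  (Z : Omega -> G).

Definition is_classifier (f : TX -> R) : Prop :=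
  measurable_fun setT f /\ (forall x, 0 <= f x <= 1).

(* Acc(pi) = Pr(Yhat = Y) = E[ 1{Y=1} pi(1|X) + 1{Y=0} pi(0|X) ] *)
Definition accuracy (f : TX -> R) : R :=
  Rintegral P setT (fun w => if Y w then f (X w) else 1 - f (X w)).

Definition pred1_given (f : TX -> R) (i : G) : R :=
  Rintegral P [set w | Z w = i] (fun w => f (X w)) /
  fine (P [set w | Z w = i]).

Definition DP_bias (f : TX -> R) : R :=
  \sum_(i : G) \sum_(j : G | j != i) `|pred1_given f i - pred1_given f j|.

Definition achievable_DP (eps a : R) : Prop :=
  exists f, is_classifier f /\ a <= accuracy f /\ DP_bias f <= eps.

End Fairness.

From HB Require Import structures.
From mathcomp Require Import all_boot all_order all_algebra.
From mathcomp Require Import all_classical all_reals all_analysis.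
Import Order.TTheory GRing.Theory Num.Theory.
Local Open Scope classical_set_scope.
Local Open Scope ring_scope.

(* Mixing the classifiers with weights beta (draw i with probability beta i,
   then predict with the i-th classifier) gives the classifier
   x |-> sum_i beta i * f_i x.  Accuracy and each pi(1 | Z = j) are
   integrals of the classifier, hence linear in it, so accuracy mixes
   exactly; the DP bias is a sum of norms of linear expressions, hence
   convex, so the bias of the mixture is at most the mixture of the biases. *)

Section Integrals.
Context {d : measure_display} {T : measurableType d} {R : realType}.

Lemma integrable_unit_valued (mu : {finite_measure set T -> \bar R})
    (A : set T) (h : T -> R) :
  measurable A -> measurable_fun setT h -> (forall w, 0 <= h w <= 1) ->
  mu.-integrable A (EFin \o h).
Proof.
move=> mA mh h01; apply: measurable_bounded_integrable => //.
- by rewrite ltey_eq fin_num_measure.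
- exact: measurable_funS mh.
- exists 1; split; first by rewrite num_real.
  move=> M M1 x _; have /andP[h0 h1] := h01 x.
  by rewrite /= ger0_norm // (le_trans h1) // ltW.
Qed.

Lemma Rintegral_lincomb (mu : measure T R) (D : set T) (I : Type) (s : seq I)
    (c : I -> R) (f : I -> T -> R) :
  measurable D -> (forall i, mu.-integrable D (EFin \o f i)) ->
  \int[mu]_(x in D) (\sum_(i <- s) c i * f i x) =
  \sum_(i <- s) c i * \int[mu]_(x in D) f i x.
Proof.
move=> mD intf.
have intZf i : mu.-integrable D (EFin \o (fun x => c i * f i x)).
  exact: (integrableZl mD (c i) (intf i)).
elim: s => [|j s IH].
  rewrite big_nil; under eq_Rintegral do rewrite big_nil.
  by rewrite Rintegral_cst // mul0r.
rewrite big_cons -IH -RintegralZl // -RintegralD //.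
  by apply: eq_Rintegral => x _; rewrite big_cons.
have -> : EFin \o (fun x => \sum_(i <- s) c i * f i x) =
    fun x => (\sum_(i <- s) (c i * f i x)%:E)%E.
  by apply/funext => x /=; rewrite -sumEFin.
by apply: integrable_sum => // i _; exact: intZf.
Qed.

End Integrals.

Definition mixture {T : Type} {R : nzRingType} {I : finType}
    (beta : I -> R) (f : I -> T -> R) (x : T) : R :=
  \sum_i beta i * f i x.

Section Mixture.
Context {dO dX : measure_display} {Omega : measurableType dO}
  {TX : measurableType dX} {R : realType} {G : finType}.
Variables (P : probability Omega R) (X : Omega -> TX) (Y : Omega -> bool)
  (Z : Omega -> G).
Hypotheses (mX : measurable_fun setT X) (mY : measurable [set w | Y w])
  (mZ : forall j : G, measurable [set w | Z w = j]).
Variables (I : finType) (beta : I -> R).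
Hypotheses (beta_ge0 : forall i, 0 <= beta i) (beta_sum1 : \sum_i beta i = 1).

Section Classifiers.
Variable f : I -> TX -> R.
Hypothesis f_classifier : forall i, is_classifier (f i).

Let f_measurable i : measurable_fun setT (f i). Proof. by case: (f_classifier i). Qed.
Let f_ge0 i x : 0 <= f i x. Proof. by case: (f_classifier i) => _ /(_ x)/andP[]. Qed.
Let f_le1 i x : f i x <= 1. Proof. by case: (f_classifier i) => _ /(_ x)/andP[]. Qed.

Lemma is_classifier_mixture : is_classifier (mixture beta f).
Proof.
split.
  by apply: measurable_sum => i; exact: measurable_realfun.measurable_funM.
move=> x; rewrite sumr_ge0 => [|i _]; last exact: mulr_ge0.
rewrite -beta_sum1 ler_sum // => i _.
by rewrite -[leRHS]mulr1 ler_wpM2l.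
Qed.

Lemma accuracy_mixture :
  accuracy P X Y (mixture beta f) = \sum_i beta i * accuracy P X Y (f i).
Proof.
pose correct (g : TX -> R) w := if Y w then g (X w) else 1 - g (X w).
have mYfun : measurable_fun setT Y.
  apply: (measurable_fun_bool true); rewrite setTI.
  by rewrite [_ @^-1` _](_ : _ = [set w | Y w]) //; apply/seteqP; split => w /=.
have correct_integrable i : P.-integrable setT (EFin \o correct (f i)).
  apply: integrable_unit_valued => //.
    have mfX : measurable_fun setT (f i \o X) by exact: measurableT_comp.
    by apply: measurable_fun_ifT => //; exact: measurable_realfun.measurable_funB.
  move=> w; rewrite /correct; case: (Y w); rewrite ?f_ge0 ?f_le1 //.
  by rewrite subr_ge0 f_le1 lerBlDr lerDl f_ge0.
rewrite /accuracy -Rintegral_lincomb //; apply: eq_Rintegral => w _.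
rewrite /correct /mixture; case: (Y w) => //.
by rewrite -[X in X - _]beta_sum1 -sumrB; apply: eq_bigr => i _; rewrite mulrBr mulr1.
Qed.

Lemma pred1_given_mixture j :
  pred1_given P X Z (mixture beta f) j = \sum_i beta i * pred1_given P X Z (f i) j.
Proof.
rewrite /pred1_given /mixture Rintegral_lincomb //; last first.
  move=> i; apply: integrable_unit_valued => // [|w]; last by rewrite f_ge0 f_le1.
  exact: measurableT_comp.
by rewrite mulr_suml; apply: eq_bigr => i _; rewrite mulrA.
Qed.

Lemma DP_bias_mixture :
  DP_bias P X Z (mixture beta f) <= \sum_i beta i * DP_bias P X Z (f i).
Proof.
rewrite /DP_bias; under [leRHS]eq_bigr do rewrite mulr_sumr.
rewrite exchange_big ler_sum // => j _.
under [leRHS]eq_bigr do rewrite mulr_sumr.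
rewrite exchange_big ler_sum // => l _.
rewrite !pred1_given_mixture -sumrB (le_trans (ler_norm_sum _ _ _)) //.
by rewrite ler_sum // => i _; rewrite -mulrBr normrM ger0_norm.
Qed.

End Classifiers.

Lemma achievable_DP_mixture (eps a : I -> R) :
  (forall i, achievable_DP P X Y Z (eps i) (a i)) ->
  achievable_DP P X Y Z (\sum_i beta i * eps i) (\sum_i beta i * a i).
Proof.
move=> /choice[f f_achieves].
have f_classifier i : is_classifier (f i) by case: (f_achieves i).
exists (mixture beta f); split; [exact: is_classifier_mixture | split].
- rewrite accuracy_mixture //; apply: ler_sum => i _.
  by rewrite ler_wpM2l //; case: (f_achieves i) => _ [].
- apply: le_trans (DP_bias_mixture _ f_classifier) _; apply: ler_sum => i _.
  by rewrite ler_wpM2l //; case: (f_achieves i) => _ [].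
Qed.

End Mixture.

Theorem proposition1 (dO dX : measure_display) (Omega : measurableType dO)
  (TX : measurableType dX) (R : realType) (G : finType)
  (P : probability Omega R) (X : Omega -> TX) (Y : Omega -> bool)
  (Z : Omega -> G)
  (mX : measurable_fun setT X)
  (mY : measurable [set w | Y w])
  (mZ : forall i : G, measurable [set w | Z w = i])
  (hG : (1 < #|G|)%N)
  (hZpos : forall i : G, (0 < P [set w | Z w = i])%E)
  (k : nat) (eps a beta : 'I_k -> R)
  (hach : forall i, achievable_DP P X Y Z (eps i) (a i))
  (hbeta : forall i, 0 <= beta i <= 1)
  (hsum : \sum_(i < k) beta i = 1) :
  achievable_DP P X Y Z (\sum_(i < k) beta i * eps i)
                        (\sum_(i < k) beta i * a i).
Proof.
have beta_ge0 i : 0 <= beta i by case/andP: (hbeta i).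
exact: achievable_DP_mixture.
Qed.
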